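(* For every integer $n\ge0$, the Franel number $\sum_{k=0}^n\binom{n}{k}^3$ equals the coefficient of $x_1^nx_2^nx_3^n$ in the Taylor expansion of $$\frac{1}{1-(x_1+x_2+x_3)+4x_1x_2x_3}.$$ Moreover, for $n_1,n_2,n_3\ge0$, the coefficient of $x_1^{n_1}x_2^{n_2}x_3^{n_3}$ in this rational function equals the coefficient of $x_1^{n_1}x_2^{n_2}x_3^{n_3}$ in $(x_1-x_2-x_3)^{n_1}(x_2-x_1-x_3)^{n_2}(x_3-x_1-x_2)^{n_3}$. *)

From HB Require Import structures.
From mathcomp Require Import all_boot all_order all_algebra.
Set Implicit Arguments. Unset Strict Implicit. Unset Printing Implicit Defensive.
Import Order.TTheory GRing.Theory Num.Theory.
Local Open Scope ring_scope.

(* s a b c = coefficient of x1^a x2^b x3^c *)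
Definition series3 := nat -> nat -> nat -> int.

Definition smono (e1 e2 e3 : nat) : series3 :=
  fun a b c => if [&& a == e1, b == e2 & c == e3] then 1 else 0.

Definition sone : series3 := smono 0 0 0.
Definition sX1 : series3 := smono 1 0 0.
Definition sX2 : series3 := smono 0 1 0.
Definition sX3 : series3 := smono 0 0 1.

Definition sadd (f g : series3) : series3 := fun a b c => f a b c + g a b c.
Definition sopp (f : series3) : series3 := fun a b c => - f a b c.
Definition ssub (f g : series3) : series3 := sadd f (sopp g).
Definition sscale (r : int) (f : series3) : series3 := fun a b c => r * f a b c.

Definition smul (f g : series3) : series3 := fun a b c =>
  \sum_(i < a.+1) \sum_(j < b.+1) \sum_(k < c.+1)
     f i j k * g (a - i)%N (b - j)%N (c - k)%N.

Definition spow (f : series3) (n : nat) : series3 := iter n (smul f) sone.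

Definition denom : series3 :=
  sadd (ssub sone (sadd (sadd sX1 sX2) sX3)) (sscale 4 (smono 1 1 1)).

Definition prodpoly (n1 n2 n3 : nat) : series3 :=
  smul (smul (spow (ssub (ssub sX1 sX2) sX3) n1)
             (spow (ssub (ssub sX2 sX1) sX3) n2))
       (spow (ssub (ssub sX3 sX1) sX2) n3).

Definition franel (n : nat) : nat := (\sum_(k < n.+1) 'C(n, k) ^ 3)%N.

From mathcomp Require Import all_boot all_order all_algebra.
From mathcomp Require Import ring zify.
From Stdlib Require Import FunctionalExtensionality.
Set Implicit Arguments.
Unset Strict Implicit.
Unset Printing Implicit Defensive.
Import GRing.Theory Num.Theory.
Local Open Scope ring_scope.

(* A series G is an inverse of the denominator iff its coefficients satisfy
   G(a,b,c) - G(a-1,b,c) - G(a,b-1,c) - G(a,b,c-1) + 4 G(a-1,b-1,c-1) = [a=b=c=0]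
   (terms with a negative index omitted), and this recurrence has at most one
   solution.  We exhibit two solutions:
   - the coefficients of the products above, computed through polynomials in
     three variables, which solve it by a factorization identity for the three
     linear forms;
   - the explicit expansion of sum_k (x1 + x2 + x3 - 4 x1x2x3)^k, whose
     coefficients are sums of (-4)^t times multinomial coefficients and solve
     the recurrence by Pascal's rule; this gives existence.
   On the diagonal the explicit expansion is
   sum_m (-4)^(n-m) C(n,m) C(n+2m,n) C(2m,m); by creative telescoping with
   explicit certificates, this sum and the Franel sum satisfy the same
   second-order recurrence, and they agree for n = 0, 1. *)

Lemma series3_ext (f g : series3) : (forall a b c, f a b c = g a b c) -> f = g.
Proof.
move=> fg; apply: functional_extensionality => a.
apply: functional_extensionality => b; apply: functional_extensionality => c.
exact: fg.
Qed.

(* Polynomials in x1, x2, x3 with integer coefficients, nested as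
   Z[x3][x2][x1]; [coef3 p] is the coefficient function of p.  It turns
   the ring operations of polynomials into those of [series3]. *)
Notation poly3 := {poly {poly {poly int}}}.

Definition coef3 (p : poly3) : series3 := fun a b c => ((p`_a)`_b)`_c.
Definition X1 : poly3 := 'X.
Definition X2 : poly3 := 'X%:P.
Definition X3 : poly3 := 'X%:P%:P.

Lemma coef3M p q : coef3 (p * q) = smul (coef3 p) (coef3 q).
Proof.
apply: series3_ext => a b c.
rewrite /coef3 /smul coefM (@coef_sum {poly int}) (@coef_sum int).
apply: eq_bigr => i _; rewrite coefM (@coef_sum int).
by apply: eq_bigr => j _; rewrite coefM.
Qed.

Lemma coef3D p q a b c : coef3 (p + q) a b c = coef3 p a b c + coef3 q a b c.
Proof. by rewrite /coef3 !coefD. Qed.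

Lemma coef3N p a b c : coef3 (- p) a b c = - coef3 p a b c.
Proof. by rewrite /coef3 !coefN. Qed.

Lemma coef3B p q a b c : coef3 (p - q) a b c = coef3 p a b c - coef3 q a b c.
Proof. by rewrite coef3D coef3N. Qed.

Lemma coef3_natM n p a b c : coef3 (n%:R * p) a b c = n%:R * coef3 p a b c.
Proof. by rewrite /coef3 !mulr_natl !coefMn. Qed.

Lemma coef3_1 : coef3 1 = sone.
Proof.
apply: series3_ext => a b c; rewrite /coef3 /sone /smono coef1.
by case: (a == 0%N); rewrite ?coef0 ?coef1 //; case: (b == 0%N);
  rewrite ?coef0 ?coef1 //; case: (c == 0%N).
Qed.

Lemma coef3_X1M p a b c :
  coef3 (X1 * p) a b c = if a is a'.+1 then coef3 p a' b c else 0.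
Proof. by rewrite /coef3 /X1 coefXM; case: a => [|a] /=; rewrite ?coef0. Qed.

Lemma coef3_X2M p a b c :
  coef3 (X2 * p) a b c = if b is b'.+1 then coef3 p a b' c else 0.
Proof. by rewrite /coef3 /X2 coefCM coefXM; case: b => [|b] /=; rewrite ?coef0. Qed.

Lemma coef3_X3M p a b c :
  coef3 (X3 * p) a b c = if c is c'.+1 then coef3 p a b c' else 0.
Proof.
by rewrite /coef3 /X3 !coefCM coefXM; case: c => [|c] /=; rewrite ?coef0.
Qed.

Lemma coef3_X123M p a b c :
  coef3 (X1 * (X2 * (X3 * p))) a b c =
  if [&& 0 < a, 0 < b & 0 < c]%N then coef3 p a.-1 b.-1 c.-1 else 0.
Proof.
by case: a b c => [|a] [|b] [|c]; rewrite coef3_X1M // ?coef3_X2M // ?coef3_X3M.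
Qed.

Lemma coef3_X1 : coef3 X1 = sX1.
Proof.
by rewrite -[X1]mulr1 /sX1 /smono; apply: series3_ext => -[|[|a]] b c;
  rewrite coef3_X1M ?coef3_1 /sone /smono.
Qed.

Lemma coef3_X2 : coef3 X2 = sX2.
Proof.
by rewrite -[X2]mulr1 /sX2 /smono; apply: series3_ext => a -[|[|b]] c;
  rewrite coef3_X2M ?coef3_1 /sone /smono ?andbF.
Qed.

Lemma coef3_X3 : coef3 X3 = sX3.
Proof.
by rewrite -[X3]mulr1 /sX3 /smono; apply: series3_ext => a b [|[|c]];
  rewrite coef3_X3M ?coef3_1 /sone /smono ?andbF.
Qed.

(** * Multiplying by the denominator *)

Lemma smulDr f g h : smul f (sadd g h) = sadd (smul f g) (smul f h).
Proof.
apply: series3_ext => a b c; rewrite /smul /sadd -big_split.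
apply: eq_bigr => i _; rewrite -big_split; apply: eq_bigr => j _.
by rewrite -big_split; apply: eq_bigr => k _; rewrite mulrDr.
Qed.

Lemma smulNr f g : smul f (sopp g) = sopp (smul f g).
Proof.
apply: series3_ext => a b c; rewrite /smul /sopp -sumrN.
apply: eq_bigr => i _; rewrite -sumrN; apply: eq_bigr => j _.
by rewrite -sumrN; apply: eq_bigr => k _; rewrite mulrN.
Qed.

Lemma smulZr f r g : smul f (sscale r g) = sscale r (smul f g).
Proof.
apply: series3_ext => a b c; rewrite /smul /sscale mulr_sumr.
apply: eq_bigr => i _; rewrite mulr_sumr; apply: eq_bigr => j _.
by rewrite mulr_sumr; apply: eq_bigr => k _; rewrite mulrCA.
Qed.

Lemma sum_indicator_sub (F : nat -> int) a e :
  \sum_(i < a.+1) (if (a - i == e)%N then 1 else 0) * F i =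
  if (e <= a)%N then F (a - e)%N else 0.
Proof.
case: leqP => [le_ea|lt_ae]; last first.
  by rewrite big1 // => i _; case: eqP => [|_]; rewrite ?mul0r //; lia.
have lt_sub : (a - e < a.+1)%N by rewrite ltnS leq_subr.
rewrite (bigD1 (Ordinal lt_sub)) //= subKn // eqxx mul1r big1 ?addr0 //.
move=> j ne_j; case: eqP => [eq_j|_]; rewrite ?mul0r //.
by case/eqP: ne_j; apply: val_inj => /=; have := ltn_ord j; lia.
Qed.

Lemma smul_mono f e1 e2 e3 a b c :
  smul f (smono e1 e2 e3) a b c =
  if [&& e1 <= a, e2 <= b & e3 <= c]%N
  then f (a - e1)%N (b - e2)%N (c - e3)%N else 0.
Proof.
rewrite /smul /smono.
transitivity (\sum_(i < a.+1) (if (a - i == e1)%N then 1 else 0) *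
   \sum_(j < b.+1) (if (b - j == e2)%N then 1 else 0) *
   \sum_(k < c.+1) (if (c - k == e3)%N then 1 else 0) * f i j k).
  apply: eq_bigr => i _; rewrite mulr_sumr; apply: eq_bigr => j _.
  rewrite !mulr_sumr; apply: eq_bigr => k _.
  by case: (a - i == e1)%N; case: (b - j == e2)%N; case: (c - k == e3)%N;
    rewrite ?mul0r ?mul1r ?mulr0 ?mulr1.
under eq_bigr => i _ do under eq_bigr => j _ do
  rewrite (sum_indicator_sub (fun k => f i j k)).
under eq_bigr => i _ do
  rewrite (sum_indicator_sub (fun j => if (e3 <= c)%N then f i j (c - e3)%N else 0)).
rewrite (sum_indicator_sub (fun i => if (e2 <= b)%N then
  if (e3 <= c)%N then f i (b - e2)%N (c - e3)%N else 0 else 0)).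
by case: (e1 <= a)%N; case: (e2 <= b)%N; case: (e3 <= c)%N.
Qed.

Definition denom_apply (G : series3) (a b c : nat) : int :=
  G a b c - (if (0 < a)%N then G a.-1 b c else 0)
          - (if (0 < b)%N then G a b.-1 c else 0)
          - (if (0 < c)%N then G a b c.-1 else 0)
          + (if [&& 0 < a, 0 < b & 0 < c]%N then 4 * G a.-1 b.-1 c.-1 else 0).

Lemma smul_denomE G a b c : smul G denom a b c = denom_apply G a b c.
Proof.
rewrite /denom /ssub !smulDr smulZr smulNr !smulDr.
rewrite /sadd /sscale /sopp /sone /sX1 /sX2 /sX3 !smul_mono /denom_apply.
by case: a => [|a]; case: b => [|b]; case: c => [|c] /=; rewrite ?subn0 ?subn1; ring.
Qed.

Lemma inverse_denomP G :
  smul G denom = sone <-> forall a b c, denom_apply G a b c = sone a b c.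
Proof.
split=> [GdE a b c|GdE]; first by rewrite -smul_denomE GdE.
by apply: series3_ext => a b c; rewrite smul_denomE GdE.
Qed.

(* Multiplication by [denom] is injective since its constant term is 1:
   the coefficient of index (a, b, c) is determined by those of smaller
   total degree. *)
Lemma denom_apply_inj G H :
  (forall a b c, denom_apply G a b c = denom_apply H a b c) -> G = H.
Proof.
move=> GH; apply: series3_ext => a b c.
suff total_deg_ind s : forall a b c, (a + b + c <= s)%N -> G a b c = H a b c.
  exact: (total_deg_ind (a + b + c)%N).
elim: s => [|s IH] {}a {}b {}c.
  move=> abc0; have [-> [-> ->]] : (a = 0 /\ b = 0 /\ c = 0)%N by lia.
  by have := GH 0%N 0%N 0%N; rewrite /denom_apply /=; lia.
move=> abc_le; have := GH a b c; rewrite /denom_apply.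
have e1 : (if (0 < a)%N then G a.-1 b c else 0) = (if (0 < a)%N then H a.-1 b c else 0).
  by case: ifP => // a_gt0; apply: IH; lia.
have e2 : (if (0 < b)%N then G a b.-1 c else 0) = (if (0 < b)%N then H a b.-1 c else 0).
  by case: ifP => // b_gt0; apply: IH; lia.
have e3 : (if (0 < c)%N then G a b c.-1 else 0) = (if (0 < c)%N then H a b c.-1 else 0).
  by case: ifP => // c_gt0; apply: IH; lia.
have e4 : (if [&& 0 < a, 0 < b & 0 < c]%N then 4 * G a.-1 b.-1 c.-1 else 0)
        = (if [&& 0 < a, 0 < b & 0 < c]%N then 4 * H a.-1 b.-1 c.-1 else 0).
  by case: ifP => // /and3P [? ? ?]; rewrite IH //; lia.
by rewrite e1 e2 e3 e4 => /addIr /subIr /subIr /subIr.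
Qed.

(** * The coefficients of the product polynomial solve the recurrence *)

Section ProductRecurrence.
Variables (R : comPzRingType) (x1 x2 x3 : R).

Definition lin1 : R := x1 - x2 - x3.
Definition lin2 : R := x2 - x1 - x3.
Definition lin3 : R := x3 - x1 - x2.
Definition prodpow (a b c : nat) : R := lin1 ^+ a * lin2 ^+ b * lin3 ^+ c.

(* It rests on the identities
   lin1 lin2 lin3 = x1 lin2 lin3 + x2 lin1 lin3 + x3 lin1 lin2 - 4 x1 x2 x3
   and lin1 lin2 = x1 lin2 + x2 lin1 + x3 (x1 + x2 + x3), and symmetric ones. *)
Lemma prodpow_split a b c : exists u1 u2 u3 : R,
  [/\ prodpow a b c =
        (if [&& a == 0, b == 0 & c == 0]%N then 1 else 0)
        + x1 * u1 + x2 * u2 + x3 * u3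
        - (if [&& 0 < a, 0 < b & 0 < c]%N
           then 4 * (x1 * (x2 * (x3 * prodpow a.-1 b.-1 c.-1))) else 0),
      (0 < a)%N -> u1 = prodpow a.-1 b c,
      (0 < b)%N -> u2 = prodpow a b.-1 c &
      (0 < c)%N -> u3 = prodpow a b c.-1].
Proof.
pose s := x1 + x2 + x3; rewrite /prodpow.
case: a => [|a]; case: b => [|b]; case: c => [|c] /=; rewrite ?expr0.
- by exists 0, 0, 0; split; rewrite // !mulr0 !addr0 subr0 !mulr1.
- exists (- lin3 ^+ c), (- lin3 ^+ c), (lin3 ^+ c); split; rewrite ?mul1r ?mulr1 //.
  by rewrite exprS /lin3; move: (_ ^+ c) => C; ring.
- exists (- lin2 ^+ b), (lin2 ^+ b), (- lin2 ^+ b); split; rewrite ?mul1r ?mulr1 //.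
  by rewrite exprS /lin2; move: (_ ^+ b) => B; ring.
- exists (s * (lin2 ^+ b * lin3 ^+ c)), (lin2 ^+ b * lin3 ^+ c.+1),
         (lin2 ^+ b.+1 * lin3 ^+ c); split; rewrite ?mul1r ?mulr1 //.
  by rewrite !exprS /s /lin2 /lin3; move: (_ ^+ b) (_ ^+ c) => B C; ring.
- exists (lin1 ^+ a), (- lin1 ^+ a), (- lin1 ^+ a); split; rewrite ?mul1r ?mulr1 //.
  by rewrite exprS /lin1; move: (_ ^+ a) => A; ring.
- exists (lin1 ^+ a * lin3 ^+ c.+1), (s * (lin1 ^+ a * lin3 ^+ c)),
         (lin1 ^+ a.+1 * lin3 ^+ c); split; rewrite ?mul1r ?mulr1 //.
  by rewrite !exprS /s /lin1 /lin3; move: (_ ^+ a) (_ ^+ c) => A C; ring.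
- exists (lin1 ^+ a * lin2 ^+ b.+1), (lin1 ^+ a.+1 * lin2 ^+ b),
         (s * (lin1 ^+ a * lin2 ^+ b)); split; rewrite ?mul1r ?mulr1 //.
  by rewrite !exprS /s /lin1 /lin2; move: (_ ^+ a) (_ ^+ b) => A B; ring.
- exists (lin1 ^+ a * lin2 ^+ b.+1 * lin3 ^+ c.+1),
         (lin1 ^+ a.+1 * lin2 ^+ b * lin3 ^+ c.+1),
         (lin1 ^+ a.+1 * lin2 ^+ b.+1 * lin3 ^+ c); split=> //.
  rewrite !exprS /lin1 /lin2 /lin3.
  by move: (_ ^+ a) (_ ^+ b) (_ ^+ c) => A B C; ring.
Qed.

End ProductRecurrence.

Definition prodcoef : series3 := fun a b c => coef3 (prodpow X1 X2 X3 a b c) a b c.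

Lemma prodpolyE n1 n2 n3 : prodpoly n1 n2 n3 = coef3 (prodpow X1 X2 X3 n1 n2 n3).
Proof.
have coef3X n p : spow (coef3 p) n = coef3 (p ^+ n).
  elim: n => [|n IHn]; first by rewrite expr0 coef3_1.
  by rewrite /spow iterS -/(spow _ n) IHn exprS coef3M.
have coef3_ssub p q : coef3 (p - q) = ssub (coef3 p) (coef3 q).
  by apply: series3_ext => a b c; rewrite coef3B.
rewrite /prodpoly /prodpow !coef3M -!coef3X /lin1 /lin2 /lin3 !coef3_ssub.
by rewrite coef3_X1 coef3_X2 coef3_X3.
Qed.

Lemma prodcoef_rec a b c : denom_apply prodcoef a b c = sone a b c.
Proof.
have [u1 [u2 [u3 [split u1E u2E u3E]]]] := prodpow_split X1 X2 X3 a b c.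
have c0 : coef3 (if [&& a == 0, b == 0 & c == 0]%N then 1 else 0) a b c = sone a b c.
  rewrite /sone /smono; case: ifP => [/and3P [/eqP-> /eqP-> /eqP->]|_].
    by rewrite coef3_1.
  by rewrite /coef3 !coef0.
have c1 : coef3 (X1 * u1) a b c = if (0 < a)%N then prodcoef a.-1 b c else 0.
  by rewrite coef3_X1M; case: (a) u1E => // a' ->.
have c2 : coef3 (X2 * u2) a b c = if (0 < b)%N then prodcoef a b.-1 c else 0.
  by rewrite coef3_X2M; case: (b) u2E => // b' ->.
have c3 : coef3 (X3 * u3) a b c = if (0 < c)%N then prodcoef a b c.-1 else 0.
  by rewrite coef3_X3M; case: (c) u3E => // c' ->.
have c4 : coef3 (if [&& 0 < a, 0 < b & 0 < c]%N
            then 4 * (X1 * (X2 * (X3 * prodpow X1 X2 X3 a.-1 b.-1 c.-1))) else 0) a b c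
          = if [&& 0 < a, 0 < b & 0 < c]%N then 4 * prodcoef a.-1 b.-1 c.-1 else 0.
  case: ifP => [abc_gt0|_]; last by rewrite /coef3 !coef0.
  by rewrite coef3_natM coef3_X123M abc_gt0.
rewrite /denom_apply {1}/prodcoef split {split} !coef3B !coef3D c0 c1 c2 c3 c4.
ring.
Qed.

(** * An explicit inverse of the denominator *)

Section Multinomial.
Local Open Scope nat_scope.

Definition multinom (i j k l : nat) : nat :=
  'C(i + (j + (k + l)), i) * 'C(j + (k + l), j) * 'C(k + l, k).

Lemma multinom_fact i j k l :
  multinom i j k l * (i`! * j`! * k`! * l`!) = (i + (j + (k + l)))`!.
Proof.
have binE n m : 'C(m + n, m) * (m`! * n`!) = (m + n)`!.
  by have := @bin_fact (m + n) m (leq_addr _ _); rewrite addKn.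
by rewrite -binE -(binE (k + l)) -(binE l) /multinom; ring.
Qed.

Lemma multinom_unique x i j k l :
  x * (i`! * j`! * k`! * l`!) = (i + (j + (k + l)))`! -> x = multinom i j k l.
Proof.
move=> xE; apply/eqP; rewrite -(@eqn_pmul2r (i`! * j`! * k`! * l`!)).
  by rewrite xE multinom_fact.
by rewrite !muln_gt0 !fact_gt0.
Qed.

Lemma multinomC12 i j k l : multinom i j k l = multinom j i k l.
Proof.
apply: multinom_unique.
have -> : j`! * i`! * k`! * l`! = i`! * j`! * k`! * l`! by ring.
by rewrite multinom_fact; congr _`!; lia.
Qed.

Lemma multinomC13 i j k l : multinom i j k l = multinom k j i l.
Proof.
apply: multinom_unique.
have -> : k`! * j`! * i`! * l`! = i`! * j`! * k`! * l`! by ring.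
by rewrite multinom_fact; congr _`!; lia.
Qed.

Lemma multinomC14 i j k l : multinom i j k l = multinom l j k i.
Proof.
apply: multinom_unique.
have -> : l`! * j`! * k`! * i`! = i`! * j`! * k`! * l`! by ring.
by rewrite multinom_fact; congr _`!; lia.
Qed.

Lemma multinom_predl i j k l :
  (i.+1 + (j + (k + l))) * multinom i j k l = i.+1 * multinom i.+1 j k l.
Proof.
apply/eqP; rewrite -(@eqn_pmul2r (i`! * j`! * k`! * l`!)); last first.
  by rewrite !muln_gt0 !fact_gt0.
have -> : i.+1 * multinom i.+1 j k l * (i`! * j`! * k`! * l`!)
          = multinom i.+1 j k l * (i.+1`! * j`! * k`! * l`!) by rewrite factS; ring.
by rewrite -mulnA !multinom_fact addSn factS.
Qed.

Lemma multinom_pascal i j k l : 0 < i + (j + (k + l)) ->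
  multinom i j k l = (if 0 < i then multinom i.-1 j k l else 0)
                   + (if 0 < j then multinom i j.-1 k l else 0)
                   + (if 0 < k then multinom i j k.-1 l else 0)
                   + (if 0 < l then multinom i j k l.-1 else 0).
Proof.
move=> N_gt0; apply/eqP; rewrite -(@eqn_pmul2l (i + (j + (k + l)))) //.
have lower i' j' k' l' : (i' + (j' + (k' + l'))) *
    (if 0 < i' then multinom i'.-1 j' k' l' else 0) = i' * multinom i' j' k' l'.
  by case: i' => [|i']; rewrite ?muln0 // multinom_predl.
have e1 := lower i j k l.
have e2 : (i + (j + (k + l))) * (if 0 < j then multinom i j.-1 k l else 0)
          = j * multinom i j k l.
  rewrite [multinom i j.-1 k l]multinomC12 [multinom i j k l]multinomC12 -lower.
  by congr (_ * _); lia.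
have e3 : (i + (j + (k + l))) * (if 0 < k then multinom i j k.-1 l else 0)
          = k * multinom i j k l.
  rewrite [multinom i j k.-1 l]multinomC13 [multinom i j k l]multinomC13 -lower.
  by congr (_ * _); lia.
have e4 : (i + (j + (k + l))) * (if 0 < l then multinom i j k l.-1 else 0)
          = l * multinom i j k l.
  rewrite [multinom i j k l.-1]multinomC14 [multinom i j k l]multinomC14 -lower.
  by congr (_ * _); lia.
by rewrite !mulnDr e1 e2 e3 e4 -!mulnDl !addnA.
Qed.

(* [word_count t a b c] counts the words with t letters [x1x2x3] and a-t,
   b-t, c-t letters x1, x2, x3: the coefficient of x1^a x2^b x3^c in
   (x1 + x2 + x3 + y x1x2x3)^(a+b+c-2t) at y^t. *)
Definition word_count (t a b c : nat) : nat :=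
  if [&& t <= a, t <= b & t <= c] then multinom t (a - t) (b - t) (c - t) else 0.

(* Pascal's rule for words: remove the last letter. *)
Lemma word_count_rec t a b c : 0 < a + b + c ->
  word_count t a b c =
    (if [&& 0 < a, 0 < b, 0 < c & 0 < t] then word_count t.-1 a.-1 b.-1 c.-1 else 0)
  + (if 0 < a then word_count t a.-1 b c else 0)
  + (if 0 < b then word_count t a b.-1 c else 0)
  + (if 0 < c then word_count t a b c.-1 else 0).
Proof.
move=> abc_gt0; rewrite /word_count.
case: ifP => [/and3P [ta tb tc]|/negbT]; last first.
  by rewrite !negb_and => t_big; repeat case: ifP => ?; lia.
rewrite multinom_pascal; last by lia.
have lower x (F : nat -> nat) : t <= x ->
    (if 0 < x - t then F (x - t).-1 else 0) =
    (if 0 < x then (if t <= x.-1 then F (x.-1 - t) else 0) else 0).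
  move=> tx; case: (posnP (x - t)) => [xt0|xt_gt0].
    by case: ifP => // x_gt0; rewrite ifF //; lia.
  by rewrite !ifT; [congr F; lia | lia | lia].
congr (_ + _ + _ + _).
- case: t {lower} ta tb tc => [|t] ta tb tc; first by rewrite !andbF.
  rewrite /= andbT !ifT; first by congr multinom; lia.
    by apply/and3P; split; lia.
  by apply/and3P; split; lia.
- by rewrite tb tc !andbT (lower a (fun m => multinom t m (b - t) (c - t))).
- by rewrite ta tc andbT (lower b (fun m => multinom t (a - t) m (c - t))).
- by rewrite ta tb (lower c (fun m => multinom t (a - t) (b - t) m)).
Qed.

End Multinomial.

(* The expansion 1/denom = sum_k (x1 + x2 + x3 - 4 x1x2x3)^k, coefficientwise;
   only t <= a contributes. *)
Definition invcoef : series3 :=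
  fun a b c => \sum_(t < a.+1) (-4) ^+ t * (word_count t a b c)%:Z.

Lemma invcoef_widen a b c K : (a < K)%N ->
  \sum_(t < K) (-4) ^+ t * (word_count t a b c)%:Z = invcoef a b c.
Proof.
move=> lt_aK; rewrite /invcoef (big_ord_widen _ (fun t => (-4) ^+ t * (word_count t a b c)%:Z) lt_aK).
rewrite [RHS]big_mkcond; apply: eq_bigr => t _; case: ifP => // t_big.
by rewrite /word_count ifF ?mulr0 //; apply/negbTE; rewrite !negb_and; lia.
Qed.

Lemma invcoef_rec a b c : denom_apply invcoef a b c = sone a b c.
Proof.
rewrite /denom_apply /sone /smono.
case: (posnP (a + b + c)) => [abc0|abc_gt0].
  have [-> [-> ->]] : (a = 0 /\ b = 0 /\ c = 0)%N by lia.
  by rewrite /invcoef big_ord1 /word_count /multinom /= expr0 mul1r.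
rewrite [RHS]ifF; last by apply/negbTE; rewrite !negb_and; lia.
pose sum_if (P : bool) (F : nat -> nat) :=
  \sum_(t < a.+1) (-4) ^+ t * (if P then F t else 0%N)%:Z.
have sum_if0 F : sum_if false F = 0 by rewrite /sum_if big1 // => t _; rewrite mulr0.
have -> : invcoef a b c =
    sum_if [&& 0 < a, 0 < b & 0 < c]%N
      (fun t => if (0 < t)%N then word_count t.-1 a.-1 b.-1 c.-1 else 0%N)
  + sum_if (0 < a)%N (fun t => word_count t a.-1 b c)
  + sum_if (0 < b)%N (fun t => word_count t a b.-1 c)
  + sum_if (0 < c)%N (fun t => word_count t a b c.-1).
  rewrite /invcoef /sum_if -!big_split; apply: eq_bigr => t _ /=.
  rewrite (word_count_rec t abc_gt0) !PoszD.
  by case: (0 < a)%N; case: (0 < b)%N; case: (0 < c)%N; case: (0 < t)%N; ring.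
have -> : sum_if (0 < a)%N (fun t => word_count t a.-1 b c) =
          if (0 < a)%N then invcoef a.-1 b c else 0.
  by case: ifP => a_gt0; rewrite ?sum_if0 // /sum_if invcoef_widen //; lia.
have -> : sum_if (0 < b)%N (fun t => word_count t a b.-1 c) =
          if (0 < b)%N then invcoef a b.-1 c else 0.
  by case: ifP.
have -> : sum_if (0 < c)%N (fun t => word_count t a b c.-1) =
          if (0 < c)%N then invcoef a b c.-1 else 0.
  by case: ifP.
have -> : sum_if [&& 0 < a, 0 < b & 0 < c]%N
      (fun t => if (0 < t)%N then word_count t.-1 a.-1 b.-1 c.-1 else 0%N) =
    if [&& 0 < a, 0 < b & 0 < c]%N then - 4 * invcoef a.-1 b.-1 c.-1 else 0.
  case: ifP => [/and3P [a_gt0 _ _]|_]; last exact: sum_if0.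
  rewrite /sum_if; clear sum_if0 sum_if.
  case: a a_gt0 {abc_gt0} => // a _.
  rewrite big_ord_recl /= mulr0 add0r /invcoef mulr_sumr.
  by apply: eq_bigr => t _; rewrite exprS mulrA.
by case: ifP => _; ring.
Qed.

(** * Creative telescoping *)

Section Telescoping.
Variable R : idomainType.

Lemma creative_telescoping (T G : nat -> nat -> R) (s a0 a1 a2 : nat -> R) n :
  (forall n m, (n < m)%N -> T n m = 0) ->
  (forall m, (m < n.+3)%N ->
     s n * (a0 n * T n m + a1 n * T n.+1 m + a2 n * T n.+2 m) = G n m.+1 - G n m) ->
  G n 0%N = 0 -> G n n.+3 = 0 -> s n != 0 ->
  a0 n * (\sum_(m < n.+1) T n m) + a1 n * (\sum_(m < n.+2) T n.+1 m)
    + a2 n * (\sum_(m < n.+3) T n.+2 m) = 0.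
Proof.
move=> T0 telescope G0 G3 s_neq0.
have widen k K : (k < K)%N -> \sum_(m < K) T k m = \sum_(m < k.+1) T k m.
  move=> lt_kK; rewrite (big_ord_widen _ (T k) lt_kK) [RHS]big_mkcond.
  by apply: eq_bigr => m _; case: ifP => // m_big; rewrite T0 //; lia.
rewrite -(widen n n.+3) 1?ltnW // -(widen n.+1 n.+3) //.
apply: (mulfI s_neq0); rewrite mulr0 !mulr_sumr -!big_split mulr_sumr /=.
rewrite (eq_bigr (fun m : 'I_n.+3 => G n m.+1 - G n m)) => [|m _]; last exact: telescope.
by rewrite -(big_mkord xpredT (fun m => G n m.+1 - G n m)) telescope_sumr // G3 G0 subr0.
Qed.

Lemma rec2_unique (a0 a1 a2 x y : nat -> R) :
  (forall n, a2 n != 0) ->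
  (forall n, a0 n * x n + a1 n * x n.+1 + a2 n * x n.+2 = 0) ->
  (forall n, a0 n * y n + a1 n * y n.+1 + a2 n * y n.+2 = 0) ->
  x 0%N = y 0%N -> x 1%N = y 1%N -> forall n, x n = y n.
Proof.
move=> a2_neq0 x_rec y_rec xy0 xy1.
suff xy n : x n = y n /\ x n.+1 = y n.+1 by move=> n; case: (xy n).
elim: n => [|n [xyn xyn1]] //; split=> //.
apply: (mulfI (a2_neq0 n)); apply: (addrI (a0 n * y n + a1 n * y n.+1)).
by rewrite -xyn -xyn1 x_rec xyn xyn1 y_rec.
Qed.

End Telescoping.

(** * The Franel recurrence *)

(* Both sides of the diagonal identity satisfy
   (n+2)^2 u(n+2) = (7n^2 + 21n + 16) u(n+1) + 8 (n+1)^2 u(n). *)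
Definition franel_c0 (n : nat) : rat := - 8 * (n%:R + 1) ^+ 2.
Definition franel_c1 (n : nat) : rat := - (7 * n%:R ^+ 2 + 21 * n%:R + 16).
Definition franel_c2 (n : nat) : rat := (n%:R + 2) ^+ 2.

Lemma natrS1 n : (n.+1%:R : rat) = n%:R + 1.
Proof. by rewrite -addn1 natrD. Qed.

Lemma natrS2 n : (n.+2%:R : rat) = n%:R + 2.
Proof. by rewrite -addn2 natrD. Qed.

Lemma natrS1_neq0 n : (n%:R + 1 : rat) != 0.
Proof. by rewrite -natrS1 pnatr_eq0. Qed.

Lemma natrS2_neq0 n : (n%:R + 2 : rat) != 0.
Proof. by rewrite -natrS2 pnatr_eq0. Qed.

Lemma binom_ratio n k :
  ('C(n, k)%:R : rat) = 'C(n.+1, k)%:R * (n%:R + 1 - k%:R) / (n%:R + 1).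
Proof.
apply: (mulIf (natrS1_neq0 n)); rewrite mulfVK ?natrS1_neq0 //.
case: (leqP k n.+1) => [le_kn1|lt_n1k]; last by rewrite !bin_small ?mul0r //; lia.
by rewrite -natrS1 -natrB // -!natrM mulnC mul_bin_down mulnC.
Qed.

Lemma binom_ratio2 n k :
  ('C(n.+1, k)%:R : rat) = 'C(n.+2, k)%:R * (n%:R + 2 - k%:R) / (n%:R + 2).
Proof. by rewrite [LHS]binom_ratio -natrS1 natrS2. Qed.

Lemma binom_diag_ratio n k :
  ('C(n.+1, k)%:R : rat) = k.+1%:R * 'C(n.+2, k.+1)%:R / (n%:R + 2).
Proof.
apply: (mulIf (natrS2_neq0 n)); rewrite mulfVK ?natrS2_neq0 //.
by rewrite -natrS2 -!natrM mulnC (mul_bin_diag n.+2 k).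
Qed.

Definition franel_term (n k : nat) : rat := 'C(n, k)%:R ^+ 3.

(* The WZ certificate of the Franel sum: G(n, k+1) = C(n+1, k)^3 p(n, k+1). *)
Definition franel_cert_poly (N K : rat) : rat :=
  (-72 - 200 * N - 202 * N ^+ 2 - 88 * N ^+ 3 - 14 * N ^+ 4)
  + (78 + 171 * N + 120 * N ^+ 2 + 27 * N ^+ 3) * K
  + (-30 - 48 * N - 18 * N ^+ 2) * K ^+ 2 + (4 + 4 * N) * K ^+ 3.

Definition franel_cert (n k : nat) : rat :=
  if k is k'.+1 then 'C(n.+1, k')%:R ^+ 3 * franel_cert_poly n%:R k%:R else 0.

Lemma franel_certE n k : franel_cert n k =
  k%:R ^+ 3 * 'C(n.+2, k)%:R ^+ 3 * franel_cert_poly n%:R k%:R / (n%:R + 2) ^+ 3.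
Proof.
case: k => [|k]; first by rewrite /franel_cert expr0n !mul0r.
by rewrite /franel_cert binom_diag_ratio expr_div_n exprMn mulrAC.
Qed.

Lemma franel_telescoping n k :
  (n%:R + 1) ^+ 2 * (franel_c0 n * franel_term n k + franel_c1 n * franel_term n.+1 k
                     + franel_c2 n * franel_term n.+2 k)
  = franel_cert n k.+1 - franel_cert n k.
Proof.
rewrite [franel_cert n k]franel_certE /franel_cert /franel_term binom_ratio.
rewrite binom_ratio2 (natrS1 k).
rewrite /franel_c0 /franel_c1 /franel_c2 /franel_cert_poly.
move: (natrS1_neq0 n) (natrS2_neq0 n).
move: ('C(n.+2, k)%:R : rat) (n%:R : rat) (k%:R : rat) => B N K nz1 nz2.
by field; rewrite nz1 nz2.
Qed.

Definition franel_sum (n : nat) : rat := \sum_(k < n.+1) franel_term n k.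

Lemma franel_sum_rec n : franel_c0 n * franel_sum n + franel_c1 n * franel_sum n.+1
                         + franel_c2 n * franel_sum n.+2 = 0.
Proof.
apply: (creative_telescoping (G := franel_cert) (s := fun n => (n%:R + 1) ^+ 2)) => //.
- by move=> n' k lt_nk; rewrite /franel_term bin_small // expr0n.
- by move=> m _; rewrite franel_telescoping.
- by rewrite /franel_cert bin_small // expr0n mul0r.
- by rewrite expf_neq0 // natrS1_neq0.
Qed.

(** * The diagonal coefficients satisfy the Franel recurrence *)

Definition trinom (n m : nat) : nat := 'C(n + 2 * m, n) * 'C(2 * m, m).

Section Trinomial.
Local Open Scope nat_scope.

Lemma trinom_fact n m : trinom n m * (n`! * (m`! * m`!)) = (n + 2 * m)`!.
Proof.
have binE k l : 'C(k + l, k) * (k`! * l`!) = (k + l)`!.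
  by have := @bin_fact (k + l) k (leq_addr _ _); rewrite addKn.
rewrite /trinom (_ : 2 * m = m + m); last by lia.
by rewrite -binE -(binE m); ring.
Qed.

Lemma trinomSl n m : n.+1 * trinom n.+1 m = (n.+1 + 2 * m) * trinom n m.
Proof.
apply/eqP; rewrite -(@eqn_pmul2r (n`! * (m`! * m`!))); last first.
  by rewrite !muln_gt0 !fact_gt0.
have -> : n.+1 * trinom n.+1 m * (n`! * (m`! * m`!)) =
          trinom n.+1 m * (n.+1`! * (m`! * m`!)) by rewrite factS; ring.
by rewrite -mulnA !trinom_fact addSn factS.
Qed.

Lemma trinomSr n m :
  m.+1 * m.+1 * trinom n m.+1 = (n + 2 * m).+1 * (n + 2 * m).+2 * trinom n m.
Proof.
apply/eqP; rewrite -(@eqn_pmul2r (n`! * (m`! * m`!))); last first.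
  by rewrite !muln_gt0 !fact_gt0.
have -> : m.+1 * m.+1 * trinom n m.+1 * (n`! * (m`! * m`!)) =
          trinom n m.+1 * (n`! * (m.+1`! * m.+1`!)) by rewrite !factS; ring.
have -> : (n + 2 * m).+1 * (n + 2 * m).+2 * trinom n m * (n`! * (m`! * m`!)) =
          (n + 2 * m).+2 * ((n + 2 * m).+1 * (trinom n m * (n`! * (m`! * m`!)))) by ring.
by rewrite !trinom_fact -!factS; apply/eqP; congr _`!; lia.
Qed.

End Trinomial.

Lemma trinom_ratio1 n m :
  ((trinom n.+1 m)%:R : rat) = (trinom n m)%:R * (n%:R + 1 + 2 * m%:R) / (n%:R + 1).
Proof.
apply: (mulIf (natrS1_neq0 n)); rewrite mulfVK ?natrS1_neq0 // -natrS1.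
have -> : (n.+1%:R + 2 * m%:R : rat) = (n.+1 + 2 * m)%:R by rewrite natrD natrM.
by rewrite -!natrM mulnC trinomSl mulnC.
Qed.

Lemma trinom_ratio2 n m : ((trinom n.+2 m)%:R : rat) =
  (trinom n m)%:R * (n%:R + 1 + 2 * m%:R) * (n%:R + 2 + 2 * m%:R)
  / ((n%:R + 1) * (n%:R + 2)).
Proof.
rewrite !trinom_ratio1 (natrS1 n).
move: (natrS1_neq0 n) (natrS2_neq0 n).
move: ((trinom n m)%:R : rat) (n%:R : rat) (m%:R : rat) => D N M nz1 nz2.
by field; rewrite nz1 nz2.
Qed.

Lemma trinom_ratioS n m : (m.+1%:R : rat) ^+ 2 * (trinom n m.+1)%:R
   = (trinom n m)%:R * (n%:R + 2 * m%:R + 1) * (n%:R + 2 * m%:R + 2).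
Proof.
have -> : (n%:R + 2 * m%:R + 1 : rat) = (n + 2 * m).+1%:R by rewrite (natrS1 (n + 2 * m)) natrD natrM.
have -> : (n%:R + 2 * m%:R + 2 : rat) = (n + 2 * m).+2%:R by rewrite (natrS2 (n + 2 * m)) natrD natrM.
by rewrite expr2 -!natrM trinomSr mulnC mulnA.
Qed.

(* The diagonal coefficient invcoef n n n is the row sum of [diag_term n]. *)
Definition diag_term (n m : nat) : rat := (-4) ^+ (n - m) * 'C(n, m)%:R * (trinom n m)%:R.

(* Its WZ certificate. *)
Definition diag_cert_c (n : nat) : rat := -3 * (3 * n%:R + 5).
Definition diag_cert (n m : nat) : rat :=
  diag_cert_c n * m%:R ^+ 2 * (-4) ^+ (n.+2 - m) * 'C(n.+1, m.-1)%:R * (trinom n m)%:R.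

Lemma diag_factor0 n m : (m <= n.+2)%N ->
  (-4) ^+ (n - m) * 'C(n, m)%:R
  = 'C(n.+2, m)%:R * (n%:R + 2 - m%:R) * (n%:R + 1 - m%:R) * (-4) ^+ (n.+2 - m)
    / (16 * (n%:R + 1) * (n%:R + 2)) :> rat.
Proof.
move=> le_mn2; case: (leqP m n) => [le_mn|lt_nm].
  rewrite (subSn (leqW le_mn)) (subSn le_mn) !exprS binom_ratio binom_ratio2.
  move: (natrS1_neq0 n) (natrS2_neq0 n).
  move: ('C(n.+2, m)%:R : rat) ((-4) ^+ (n - m) : rat) (n%:R : rat) (m%:R : rat).
  by move=> B q N M nz1 nz2; field; rewrite nz1 nz2.
rewrite bin_small // mulr0.
have [->|->] : m = n.+1 \/ m = n.+2 by lia.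
  by rewrite (natrS1 n) subrr mulr0 !mul0r.
by rewrite (natrS2 n) subrr mulr0 !mul0r.
Qed.

Lemma diag_factor1 n m : (m <= n.+2)%N ->
  (-4) ^+ (n.+1 - m) * 'C(n.+1, m)%:R
  = - ('C(n.+2, m)%:R * (n%:R + 2 - m%:R) * (-4) ^+ (n.+2 - m) / (4 * (n%:R + 2))) :> rat.
Proof.
move=> le_mn2; case: (leqP m n.+1) => [le_mn1|lt_n1m].
  rewrite (subSn le_mn1) exprS binom_ratio2.
  move: (natrS2_neq0 n).
  move: ('C(n.+2, m)%:R : rat) ((-4) ^+ (n.+1 - m) : rat) (n%:R : rat) (m%:R : rat).
  by move=> B q N M nz2; field; rewrite nz2.
have -> : m = n.+2 by lia.
by rewrite bin_small // mulr0 (natrS2 n) subrr mulr0 !mul0r oppr0.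
Qed.

Lemma diag_certE n m : diag_cert n m =
  diag_cert_c n * m%:R ^+ 3 * (-4) ^+ (n.+2 - m) * 'C(n.+2, m)%:R * (trinom n m)%:R
  / (n%:R + 2).
Proof.
case: m => [|m]; first by rewrite /diag_cert !expr0n !mulr0 !mul0r.
rewrite /diag_cert /= binom_diag_ratio.
move: (natrS2_neq0 n) => nz2.
move: (m.+1%:R : rat) ('C(n.+2, m.+1)%:R : rat) => M B.
by field.
Qed.

Lemma diag_telescoping n m : (m < n.+3)%N ->
  (n%:R + 1) * (franel_c0 n * diag_term n m + franel_c1 n * diag_term n.+1 m
                + franel_c2 n * diag_term n.+2 m)
  = diag_cert n m.+1 - diag_cert n m.
Proof.
rewrite ltnS => le_mn2.
have cert_succ : diag_cert n m.+1 = diag_cert_c n *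
    ((-4) ^+ (n.+1 - m) * 'C(n.+1, m)%:R) * (m.+1%:R ^+ 2 * (trinom n m.+1)%:R).
  by rewrite /diag_cert subSS /=; ring.
rewrite cert_succ diag_certE trinom_ratioS /diag_term.
rewrite (diag_factor0 le_mn2) !(diag_factor1 le_mn2) trinom_ratio2 trinom_ratio1.
rewrite /franel_c0 /franel_c1 /franel_c2 /diag_cert_c.
move: (natrS1_neq0 n) (natrS2_neq0 n).
move: ('C(n.+2, m)%:R : rat) ((-4) ^+ (n.+2 - m) : rat) ((trinom n m)%:R : rat).
move: (n%:R : rat) (m%:R : rat) => N M B q D nz1 nz2.
by field; rewrite nz1 nz2.
Qed.

Definition diag_sum (n : nat) : rat := \sum_(m < n.+1) diag_term n m.

Lemma diag_sum_rec n : franel_c0 n * diag_sum n + franel_c1 n * diag_sum n.+1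
                       + franel_c2 n * diag_sum n.+2 = 0.
Proof.
apply: (creative_telescoping (G := diag_cert) (s := fun n => n%:R + 1)).
- by move=> n' m lt_nm; rewrite /diag_term bin_small // mulr0 mul0r.
- exact: diag_telescoping.
- by rewrite /diag_cert expr0n !mulr0 !mul0r.
- by rewrite /diag_cert /= bin_small // mulr0 mul0r.
- exact: natrS1_neq0.
Qed.

Lemma franel_sum_diag n : franel_sum n = diag_sum n.
Proof.
apply: (rec2_unique _ franel_sum_rec diag_sum_rec) => [k||].
- by rewrite expf_neq0 ?natrS2_neq0.
- by rewrite /franel_sum /diag_sum !big_ord1 /franel_term /diag_term /trinom.
- by rewrite /franel_sum /diag_sum !big_ord_recr !big_ord0 /franel_term /diag_term /trinom.
Qed.

Lemma franel_sumE n : franel_sum n = (franel n)%:R.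
Proof.
by rewrite /franel_sum /franel natr_sum; apply: eq_bigr => k _; rewrite natrX.
Qed.

Lemma multinom_diag n m : (m <= n)%N -> multinom (n - m) m m m = 'C(n, m) * trinom n m.
Proof.
move=> le_mn; apply/esym/multinom_unique.
have -> : (n - m + (m + (m + m)) = n + 2 * m)%N by lia.
by rewrite -trinom_fact -(bin_fact le_mn); ring.
Qed.

(* On the diagonal, the explicit inverse is the diagonal sum (t = n - m). *)
Lemma invcoef_diag n : (invcoef n n n)%:~R = diag_sum n.
Proof.
rewrite /invcoef rmorph_sum (reindex_inj rev_ord_inj) /diag_sum /=.
apply: eq_bigr => m _; rewrite subSS rmorphM rmorphXn /= /word_count.
have le_mn : (m <= n)%N by have := ltn_ord m; lia.
rewrite ifT; last by apply/and3P; split; lia.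
rewrite (_ : n - (n - m) = m)%N; last by lia.
by rewrite multinom_diag // /diag_term -mulrA -natrM.
Qed.

Theorem mainTheorem8 :
  (exists G : series3, smul G denom = sone) /\
  (forall G : series3, smul G denom = sone ->
     (forall n : nat, G n n n = (franel n)%:Z) /\
     (forall n1 n2 n3 : nat, G n1 n2 n3 = prodpoly n1 n2 n3 n1 n2 n3)).
Proof.
split; first by exists invcoef; apply/inverse_denomP; exact: invcoef_rec.
move=> G /inverse_denomP G_rec.
have G_inv : G = invcoef.
  by apply: denom_apply_inj => a b c; rewrite G_rec invcoef_rec.
have prod_inv : prodcoef = invcoef.
  by apply: denom_apply_inj => a b c; rewrite prodcoef_rec invcoef_rec.
split=> [n|n1 n2 n3]; rewrite G_inv.
  by apply: (@intr_inj rat); rewrite invcoef_diag -franel_sum_diag franel_sumE.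
by rewrite -prod_inv prodpolyE.
Qed.
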